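(* Let $V$ be an indecomposable Whittaker module of type $\eta$ over $R$ with cyclic Whittaker vector $w$, and suppose $Z_V=(p(\Omega)^n)$ where $p$ is an irreducible polynomial and $n\ge 1$. Then every submodule $V'\subseteq V$ is of the form $V'=Rp(\Omega)^iw$ for some $i\in\{0,\dots,n\}$.
   Context: Let $f\in\mathbb{C}[H]$ be a polynomial. $R=R(f)$ is the associative $\mathbb{C}$-algebra generated by $E,F,H$ with relations $EF-FE=f(H)$, $HE-EH=E$, $HF-FH=-F$. Let $u\in\mathbb{C}[H]$ satisfy $f(H)=\tfrac12(u(H+1)-u(H))$ and $\Omega=2FE+u(H+1)$; the center $Z(R)$ is the polynomial ring $\mathbb{C}[\Omega]$. Let $R(E)=\mathbb{C}[E]$ and fix an algebra homomorphism $\eta:R(E)\to\mathbb{C}$ with $\eta(E)\neq0$. A vector $v$ of an $R$-module $V$ is a Whittaker vector of type $\eta$ if $Ev=\eta(E)v$; $V$ is a Whittaker module of type $\eta$ with cyclic Whittaker vector $w$ if $w$ is a Whittaker vector and $V=Rw$. $Z_V=\mathrm{Ann}_R(V)\cap Z(R)$. *)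

From HB Require Import structures.
From mathcomp Require Import all_boot all_order all_algebra.
From mathcomp Require Import reals complex.
Set Implicit Arguments. Unset Strict Implicit. Unset Printing Implicit Defensive.
Import Order.TTheory GRing.Theory Num.Theory.
Local Open Scope ring_scope.

(* Complex numbers are modelled as R[i] for R : realType
   (every realType is a complete archimedean real closed field). *)

Section Whittaker.
Variables (K : nzRingType) (V : lmodType K).

Definition opeval (p : {poly K}) (T : V -> V) (v : V) : V :=
  \sum_(i < size p) p`_i *: iter i T v.

Definition submod (E F H : V -> V) (S : V -> Prop) : Prop :=
  [/\ S 0, (forall x y, S x -> S y -> S (x + y)),
      (forall (a : K) x, S x -> S (a *: x)) &
      (forall x, S x -> [/\ S (E x), S (F x) & S (H x)])].

Definition gen (E F H : V -> V) (x : V) : V -> Prop :=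
  fun v => forall S, submod E F H S -> S x -> S v.

Definition Rf_relations (f : {poly K}) (E F H : V -> V) : Prop :=
  forall v, [/\ E (F v) - F (E v) = opeval f H v,
               H (E v) - E (H v) = E v &
               H (F v) - F (H v) = - F v].

Definition Omega (u : {poly K}) (E F H : V -> V) (v : V) : V :=
  2%:R *: F (E v) + opeval (u \Po ('X + 1)) H v.

Definition indecomposable (E F H : V -> V) : Prop :=
  (exists v : V, v != 0) /\
  forall A B, submod E F H A -> submod E F H B ->
    (forall v, A v -> B v -> v = 0) ->
    (forall v, exists a b, [/\ A a, B b & v = a + b]) ->
    (forall v, A v -> v = 0) \/ (forall v, B v -> v = 0).

(* V is a Whittaker module of type eta (eta(E) = e) with cyclic Whittaker vector w *)
Definition whittaker_cyclic (E F H : V -> V) (e : K) (w : V) : Prop :=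
  E w = e *: w /\ forall v, gen E F H w v.

End Whittaker.

From HB Require Import structures.
From mathcomp Require Import all_boot all_order all_algebra.
From mathcomp Require Import reals complex.
From mathcomp Require Import boolp.
Import Order.TTheory GRing.Theory Num.Theory.
Local Open Scope ring_scope.
Set Implicit Arguments. Unset Strict Implicit.

(* Every vector of V has the form sum_j H^j c_j(Omega) w: these sums contain w
   and are stable under H, under Omega (which is central) and under E and F,
   since E and F commute with Omega and move H to H - 1 and H + 1.  If such a
   sum of H-degree d lies in a submodule V', then applying E - eta(E) lowers the
   degree and multiplies the top coefficient by -d eta(E) != 0, so by induction
   c_d(Omega) w lies in V'.  Hence the q with q(Omega) w in V' form an ideal of
   C[Omega] containing p^n, generated by some p^i, and peeling off top terms
   shows V' = R p(Omega)^i w. *)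

Section OperatorPolynomials.
Variables (K : comNzRingType) (V : lmodType K).
Implicit Types (p q : {poly K}) (v x : V).

Lemma opeval_widen N p (T : V -> V) v : (size p <= N)%N ->
  opeval p T v = \sum_(i < N) p`_i *: iter i T v.
Proof.
move=> le_pN; rewrite /opeval (big_ord_widen N (fun i => p`_i *: iter i T v)) //.
rewrite big_mkcond; apply: eq_bigr => i _.
by case: ltnP => // /(nth_default 0) ->; rewrite scale0r.
Qed.

Lemma opevalC c (T : V -> V) v : opeval c%:P T v = c *: v.
Proof. by rewrite (opeval_widen _ _ (size_polyC_leq1 c)) big_ord1 coefC. Qed.

Lemma opevalP a p q (T : V -> V) v :
  opeval (a *: p + q) T v = a *: opeval p T v + opeval q T v.
Proof.
pose N := maxn (size p) (size q).
have le_pN : (size p <= N)%N by rewrite leq_maxl.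
have le_qN : (size q <= N)%N by rewrite leq_maxr.
have le_N : (size (a *: p + q)%R <= N)%N.
  by rewrite (leq_trans (size_polyD _ _)) // geq_max (leq_trans (size_scale_leq _ _)).
rewrite !(opeval_widen _ _ le_N, opeval_widen _ _ le_pN, opeval_widen _ _ le_qN).
rewrite scaler_sumr -big_split; apply: eq_bigr => i _.
by rewrite coefD coefZ scalerDl scalerA.
Qed.

Lemma opevalD p q (T : V -> V) v : opeval (p + q) T v = opeval p T v + opeval q T v.
Proof. by have := opevalP 1 p q T v; rewrite !scale1r. Qed.

Lemma opevalZ a p (T : V -> V) v : opeval (a *: p) T v = a *: opeval p T v.
Proof. by have := opevalP a p 0 T v; rewrite -polyC0 opevalC scale0r !addr0. Qed.

Lemma opeval0 (T : V -> V) v : opeval 0 T v = 0.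
Proof. by rewrite -polyC0 opevalC scale0r. Qed.

Lemma opevalB p q (T : V -> V) v : opeval (p - q) T v = opeval p T v - opeval q T v.
Proof. by have := opevalP (-1) q p T v; rewrite !scaleN1r !(addrC (- _)). Qed.

Lemma opevalMX p (T : V -> V) v : opeval (p * 'X) T v = opeval p T (T v).
Proof.
have le_pX : (size (p * 'X)%R <= (size p).+1)%N.
  by rewrite (leq_trans (size_polyMleq _ _)) // size_polyX addn2.
rewrite (opeval_widen _ _ le_pX) big_ord_recl coefMX eqxx scale0r add0r.
by apply: eq_bigr => i _; rewrite coefMX /= -iterSr.
Qed.

Lemma opevalX (T : V -> V) v : opeval 'X T v = T v.
Proof. by rewrite -[ 'X]mul1r opevalMX -polyC1 opevalC scale1r. Qed.

Lemma opevalXn n (T : V -> V) v : opeval 'X^n T v = iter n T v.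
Proof.
elim: n v => [|n IHn] v; first by rewrite expr0 -polyC1 opevalC scale1r.
by rewrite exprSr opevalMX IHn -iterSr.
Qed.

Lemma iter_comm (S T : V -> V) n v : (forall x, S (T x) = T (S x)) ->
  S (iter n T v) = iter n T (S v).
Proof. by move=> ST; elim: n => //= n <-. Qed.

Lemma opeval_comm (S : {linear V -> V}) (T : V -> V) p v :
  (forall x, S (T x) = T (S x)) -> S (opeval p T v) = opeval p T (S v).
Proof.
move=> ST; rewrite linear_sum; apply: eq_bigr => i _.
by rewrite linearZ /= (iter_comm _ _ ST).
Qed.

Section LinearOperator.
Variable T : {linear V -> V}.

Lemma iter_is_linear n : linear (iter n T).
Proof. by elim: n => [//|n IHn] a x y /=; rewrite IHn linearP. Qed.
HB.instance Definition _ n :=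
  GRing.isLinear.Build K V V *:%R (iter n T) (iter_is_linear n).

Lemma opeval_is_linear p : linear (opeval p T).
Proof.
move=> a x y; rewrite /opeval scaler_sumr -big_split; apply: eq_bigr => i _ /=.
by rewrite linearP scalerDr !scalerA mulrC.
Qed.
HB.instance Definition _ p :=
  GRing.isLinear.Build K V V *:%R (opeval p T) (opeval_is_linear p).

Lemma opevalM p q v : opeval (p * q) T v = opeval p T (opeval q T v).
Proof.
elim/poly_ind: p q v => [|p c IHp] q v.
  by rewrite mul0r -polyC0 !opevalC !scale0r.
rewrite mulrDl -mulrA opevalD IHp mul_polyC opevalZ opevalD opevalC opevalMX.
by rewrite mulrC opevalMX (opeval_comm (S := T)).
Qed.

Lemma opeval_shift (S : {linear V -> V}) c p v :
  (forall x, S (T x) = T (S x) - c *: S x) ->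
  S (opeval p T v) = opeval (p \Po ('X - c%:P)) T (S v).
Proof.
move=> ST; elim/poly_ind: p v => [|p d IHp] v.
  by rewrite comp_poly0 -polyC0 !opevalC !scale0r linear0.
rewrite comp_polyD comp_polyM comp_polyX comp_polyC !opevalD !opevalC opevalMX.
rewrite linearD linearZ IHp ST opevalM -polyCN opevalD opevalX opevalC.
by rewrite scaleNr.
Qed.
End LinearOperator.
End OperatorPolynomials.

Section DifferenceOperator.
Variable R : comNzRingType.
Implicit Types (c : R) (r : {poly R}).

Lemma coef_exp_XsubC_pred c d : (('X - c%:P) ^+ d.+1)`_d = - (c *+ d.+1).
Proof.
have := @coefPn_prod_XsubC _ (nseq d.+1 c).
by rewrite size_nseq !big_nseq iter_mulr_1 iter_addr_0; apply.
Qed.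

Lemma coef_comp_XsubC r c d : (size r <= d.+2)%N ->
  (r \Po ('X - c%:P))`_d = r`_d - r`_d.+1 * c *+ d.+1.
Proof.
move=> le_r; rewrite comp_polyE coef_sum.
rewrite (big_ord_widen d.+2 (fun i => (r`_i *: ('X - c%:P) ^+ i)`_d)) //.
have coefZ_if k (q : {poly R}) :
    (if (k < size r)%N then (r`_k *: q)`_d else 0) = r`_k * q`_d.
  by rewrite coefZ; case: ltnP => // /(nth_default 0) ->; rewrite mul0r.
rewrite big_mkcond !big_ord_recr /= big1 => [|i _]; last first.
  by rewrite coefZ_if [X in _ * X]nth_default ?mulr0 ?size_exp_XsubC.
have lead_exp : (('X - c%:P) ^+ d)`_d = 1.
  by have := monicP (monic_exp d (monicXsubC c)); rewrite /lead_coef size_exp_XsubC.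
by rewrite !coefZ_if lead_exp coef_exp_XsubC_pred mulr1 add0r mulrN mulrnAr.
Qed.

Lemma coef_comp_XsubC_sub r c d : (size r <= d.+2)%N ->
  (r \Po ('X - c%:P) - r)`_d = - (r`_d.+1 * c *+ d.+1).
Proof. by move=> le_r; rewrite coefB coef_comp_XsubC // addrAC subrr add0r. Qed.

Lemma size_comp_XsubC_sub r c d : (size r <= d.+1)%N ->
  (size (r \Po ('X - c%:P) - r)%R <= d)%N.
Proof.
move=> le_r; apply/leq_sizeP => j le_dj.
have le_rj : (size r <= j.+1)%N by apply: leq_trans le_r _; rewrite ltnS.
by rewrite coef_comp_XsubC_sub ?(leqW le_rj) // nth_default ?mul0r ?mul0rn ?oppr0.
Qed.

End DifferenceOperator.

Section PowersOfIrreducible.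
Variable K : fieldType.
Implicit Types (p q g : {poly K}).

Lemma dvdp_exp_irred p g n : irreducible_poly p -> g %| p ^+ n ->
  exists2 k, (k <= n)%N & g %= p ^+ k.
Proof.
move=> irr_p; elim: n g => [|n IHn] g.
  by rewrite expr0 dvdp1 size_poly_eq1 => g1; exists 0%N; rewrite ?expr0.
have [pg | npg] := boolP (p %| g) => g_dvd.
  have [k le_kn gp] : exists2 k, (k <= n)%N & g %/ p %= p ^+ k.
    apply: IHn; rewrite -(dvdp_mul2r _ _ (irredp_neq0 irr_p)) divpK //.
    by rewrite -exprSr.
  by exists k.+1; rewrite // exprSr -(divpK pg) eqp_mul2r ?irredp_neq0.
have cop : coprimep p g.
  apply: contraNT npg; rewrite /coprimep => ng1.
  by rewrite -(eqp_dvdl _ (irr_p _ ng1 (dvdp_gcdl p g))) dvdp_gcdr.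
have [k le_kn gp] : exists2 k, (k <= n)%N & g %= p ^+ k.
  by apply: IHn; move: g_dvd; rewrite exprS Gauss_dvdpr // coprimep_sym.
by exists k => //; apply: leqW.
Qed.

Lemma ideal_exp_irred (J : {poly K} -> Prop) p n : irreducible_poly p ->
  (forall a b q r, J q -> J r -> J (a * q + b * r)) -> J (p ^+ n) ->
  exists i, [/\ (i <= n)%N, J (p ^+ i) & forall q, J q -> p ^+ i %| q].
Proof.
move=> irr_p J_comb Jpn.
have J_eqp q r : q %= r -> J q -> J r.
  move=> /eqpP [[a b] /= /andP [a0 b0] ab] Jq.
  have -> : r = (b^-1 * a)%:P * q + 0 * q.
    by rewrite mul0r addr0 mul_polyC -scalerA ab scalerA mulVf ?scale1r.
  exact: J_comb.
have exJ : exists i, `[< J (p ^+ i) >] by exists n; apply/asboolP.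
have [i /asboolP Ji min_i] := ex_minnP exJ.
exists i; split => //; first by apply/min_i/asboolP.
move=> q Jq; have [[a b] Jgcd] := Bezoutp q (p ^+ n).
have [k le_kn gcd_pk] := dvdp_exp_irred irr_p (dvdp_gcdr q (p ^+ n)).
have le_ik : (i <= k)%N.
  by apply/min_i/asboolP/(J_eqp _ _ gcd_pk)/(J_eqp _ _ Jgcd)/J_comb.
by rewrite (dvdp_trans (dvdp_exp2l p le_ik)) // -(eqp_dvdl _ gcd_pk) dvdp_gcdl.
Qed.
End PowersOfIrreducible.

Section Submodules.
Variables (K : nzRingType) (V : lmodType K) (E F H : V -> V).

Section Closure.
Variable S : V -> Prop.
Hypothesis subS : submod E F H S.

Lemma submod0 : S 0. Proof. by case: subS. Qed.
Lemma submodD x y : S x -> S y -> S (x + y).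
Proof. by case: subS => _ + _ _; apply. Qed.
Lemma submodZ a x : S x -> S (a *: x). Proof. by case: subS => _ _ + _; apply. Qed.
Lemma submodB x y : S x -> S y -> S (x - y).
Proof. by move=> Sx Sy; rewrite -scaleN1r; apply/submodD/submodZ. Qed.
Lemma submodE x : S x -> S (E x). Proof. by case: subS => _ _ _ h /h []. Qed.
Lemma submodF x : S x -> S (F x). Proof. by case: subS => _ _ _ h /h []. Qed.
Lemma submodH x : S x -> S (H x). Proof. by case: subS => _ _ _ h /h []. Qed.

Lemma submod_opeval (T : V -> V) p x :
  (forall y, S y -> S (T y)) -> S x -> S (opeval p T x).
Proof.
move=> ST Sx; apply: big_ind => [|y z|i _]; [exact: submod0 | exact: submodD |].
by apply: submodZ; elim: (i : nat) => //= k; apply: ST.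
Qed.

Lemma submod_opevalH p x : S x -> S (opeval p H x).
Proof. by move=> Sx; apply: submod_opeval Sx => y; apply: submodH. Qed.

Lemma submod_Omega u x : S x -> S (Omega u E F H x).
Proof.
move=> Sx; apply: submodD; first by apply/submodZ/submodF/submodE.
exact: submod_opevalH.
Qed.

Lemma submod_opeval_Omega u p x : S x -> S (opeval p (Omega u E F H) x).
Proof. by move=> Sx; apply: submod_opeval Sx => y; apply: submod_Omega. Qed.

End Closure.

Lemma gen_submod z : submod E F H (gen E F H z).
Proof.
split=> [S subS _ | x y Gx Gy S subS Sz | a x Gx S subS Sz | x Gx].
- exact: submod0.
- by apply: submodD => //; [apply: Gx | apply: Gy].
- by apply: submodZ => //; apply: Gx.
by split=> S subS Sz;
  [apply: submodE | apply: submodF | apply: submodH] => //; apply: Gx.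
Qed.

End Submodules.

Section OmegaLinear.
Variables (K : comNzRingType) (V : lmodType K) (E F H : {linear V -> V}).
Variable u : {poly K}.

Lemma Omega_is_linear : linear (Omega u E F H).
Proof.
move=> a x y; rewrite /Omega [E _]linearP [F _]linearP [opeval _ _ _]linearP.
by rewrite !scalerDr !scalerA [2%:R * a]mulrC addrACA.
Qed.
HB.instance Definition _ :=
  GRing.isLinear.Build K V V *:%R (Omega u E F H) Omega_is_linear.

End OmegaLinear.

Section WhittakerModule.
Variables (K : numFieldType) (V : lmodType K) (E F H : {linear V -> V}).
Variables (f u : {poly K}).
Hypothesis hfu : f = 2%:R^-1 *: (u \Po ('X + 1) - u).
Hypothesis hrel : Rf_relations f E F H.
Local Notation Om := (Omega u E F H).
Implicit Types (x y v : V) (a q : {poly K}) (c : {poly {poly K}}).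

Lemma EF_rel x : E (F x) = F (E x) + opeval f H x.
Proof. by have [/eqP + _ _] := hrel x; rewrite subr_eq addrC => /eqP. Qed.
Lemma HE_rel x : H (E x) = E (H x) + E x.
Proof. by have [_ /eqP + _] := hrel x; rewrite subr_eq addrC => /eqP. Qed.
Lemma HF_rel x : H (F x) = F (H x) - F x.
Proof. by have [_ _ /eqP] := hrel x; rewrite subr_eq addrC => /eqP. Qed.

Lemma EH_shift x : E (H x) = H (E x) - 1 *: E x.
Proof. by rewrite HE_rel scale1r addrK. Qed.
Lemma FH_shift x : F (H x) = H (F x) - (-1) *: F x.
Proof. by rewrite HF_rel scaleN1r opprK subrK. Qed.

Lemma Omega_commH x : H (Om x) = Om (H x).
Proof.
rewrite /Omega linearD linearZ HF_rel HE_rel linearD addrK.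
by rewrite (opeval_comm (S := H)).
Qed.

Lemma Omega_commE x : E (Om x) = Om (E x).
Proof.
rewrite /Omega linearD linearZ /= EF_rel scalerDr -addrA; congr (_ + _).
rewrite (opeval_shift _ _ EH_shift) -polyC1 comp_polyXaddC_K -opevalZ -opevalD.
by rewrite hfu scalerA mulfV ?pnatr_eq0 // scale1r subrK polyC1.
Qed.

Lemma Omega_commF x : F (Om x) = Om (F x).
Proof.
rewrite /Omega linearD linearZ /= EF_rel linearD scalerDr -addrA; congr (_ + _).
rewrite !(opeval_shift _ _ FH_shift) -opevalZ -opevalD -comp_polyZ.
rewrite hfu scalerA mulfV ?pnatr_eq0 // scale1r comp_polyB.
by rewrite polyCN opprK polyC1 subrK.
Qed.

Lemma opeval_Omega_commH a x : opeval a Om (H x) = H (opeval a Om x).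
Proof. by rewrite (opeval_comm _ _ Omega_commH). Qed.

Variables (e : K) (w : V).
Hypotheses (e_neq0 : e != 0) (Ew : E w = e *: w).

(* [hoeval c] is the vector sum_j H^j c_j(Omega) w: the outer variable of [c]
   stands for H, the inner one for Omega. *)
Definition hoeval c : V := \sum_(j < size c) iter j H (opeval c`_j Om w).

Lemma hoeval_widen N c : (size c <= N)%N ->
  hoeval c = \sum_(j < N) iter j H (opeval c`_j Om w).
Proof.
move=> le_cN; rewrite /hoeval.
rewrite (big_ord_widen N (fun j => iter j H (opeval c`_j Om w))) //.
rewrite big_mkcond; apply: eq_bigr => j _.
by case: ltnP => // /(nth_default 0) ->; rewrite opeval0 linear0.
Qed.

Lemma hoeval_is_zmod_morphism : zmod_morphism hoeval.
Proof.
move=> c d; pose N := maxn (size c) (size d).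
have le_cN : (size c <= N)%N by rewrite leq_maxl.
have le_dN : (size d <= N)%N by rewrite leq_maxr.
have le_N : (size (c - d)%R <= N)%N.
  by rewrite (leq_trans (size_polyD _ _)) // size_polyN.
rewrite !(hoeval_widen le_N, hoeval_widen le_cN, hoeval_widen le_dN) -sumrB.
by apply: eq_bigr => j _; rewrite coefB opevalB linearB.
Qed.
HB.instance Definition _ :=
  GRing.isZmodMorphism.Build {poly {poly K}} V hoeval hoeval_is_zmod_morphism.

Lemma hoeval1 : hoeval 1 = w.
Proof. by rewrite /hoeval size_poly1 big_ord1 coef1 /= -polyC1 opevalC scale1r. Qed.

Lemma hoeval_scale a c : hoeval (a *: c) = opeval a Om (hoeval c).
Proof.
rewrite (hoeval_widen (size_scale_leq a c)) /hoeval linear_sum.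
apply: eq_bigr => j _.
by rewrite coefZ opevalM; symmetry; apply: iter_comm; apply: opeval_Omega_commH.
Qed.

Lemma hoevalC a : hoeval a%:P = opeval a Om w.
Proof. by rewrite -[a%:P]mulr1 mul_polyC hoeval_scale hoeval1. Qed.

Lemma hoeval_mulX c : hoeval ('X * c) = H (hoeval c).
Proof.
have le_Xc : (size ('X * c)%R <= (size c).+1)%N.
  by rewrite mulrC (leq_trans (size_polyMleq _ _)) // size_polyX addn2.
rewrite (hoeval_widen le_Xc) big_ord_recl coefXM eqxx opeval0 linear0 add0r.
by rewrite /hoeval linear_sum; apply: eq_bigr => j _; rewrite coefXM.
Qed.

Lemma hoeval_lift g c : hoeval (g^:P * c) = opeval g H (hoeval c).
Proof.
elim/poly_ind: g c => [|g k IHg] c; first by rewrite rmorph0 mul0r raddf0 opeval0.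
rewrite rmorphD rmorphM /= map_polyX map_polyC /= mulrDl -mulrA raddfD /= IHg.
by rewrite mul_polyC hoeval_mulX hoeval_scale opevalD opevalMX !opevalC.
Qed.

Lemma hoeval_shift (S : {linear V -> V}) k d c :
    (forall x, S (H x) = H (S x) - k *: S x) -> (forall x, S (Om x) = Om (S x)) ->
  S w = hoeval d -> S (hoeval c) = hoeval ((c \Po ('X - k%:P%:P)) * d).
Proof.
move=> SH SOm Sw; have Xk : 'X - k%:P%:P = ('X - k%:P)^:P.
  by rewrite rmorphB /= map_polyX map_polyC.
rewrite comp_polyE mulr_suml !raddf_sum; apply: eq_bigr => j _ /=.
rewrite -scalerAl hoeval_scale Xk -rmorphXn hoeval_lift -Sw -opevalXn.
rewrite (opeval_shift _ _ SH) comp_Xn_poly (opeval_comm _ _ SOm).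
by rewrite (opeval_comm _ _ (opeval_Omega_commH _)).
Qed.

Lemma hoeval_E c : E (hoeval c) = e *: hoeval (c \Po ('X - 1%:P)).
Proof.
have Ew' : E w = hoeval e%:P%:P by rewrite hoevalC opevalC.
rewrite (hoeval_shift _ EH_shift Omega_commE Ew') polyC1 mulrC mul_polyC.
by rewrite hoeval_scale opevalC.
Qed.

Lemma hoeval_surj (gen_w : forall v, gen E F H w v) v : exists c, v = hoeval c.
Proof.
have [dF Fw] : exists d, F w = hoeval d.
  exists ((2%:R * e)^-1%:P *: ('X%:P - (u \Po ('X + 1))^:P)).
  rewrite hoeval_scale raddfB /= hoevalC opevalX -[_^:P]mulr1 hoeval_lift.
  rewrite hoeval1 /Omega Ew linearZ /= addrK opevalC !scalerA -mulrA mulVf.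
    by rewrite scale1r.
  by rewrite mulf_neq0 ?pnatr_eq0.
apply: (gen_w v (fun v => exists c, v = hoeval c)); last by exists 1; rewrite hoeval1.
split=> [|x y [c ->] [d ->]|a x [c ->]|x [c ->]].
- by exists 0; rewrite raddf0.
- by exists (c + d); rewrite raddfD.
- by exists (a%:P *: c); rewrite hoeval_scale opevalC.
split.
- by exists (e%:P *: (c \Po ('X - 1%:P))); rewrite hoeval_E hoeval_scale opevalC.
- by exists ((c \Po ('X - (-1)%:P%:P)) * dF); apply: hoeval_shift FH_shift Omega_commF Fw.
by exists ('X * c); rewrite hoeval_mulX.
Qed.

Section Submodule.
Variable V' : V -> Prop.
Hypothesis subV' : submod E F H V'.

Lemma coef_hoeval_in d c :
  (size c <= d.+1)%N -> V' (hoeval c) -> V' (opeval c`_d Om w).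
Proof.
elim: d c => [|d IHd] c le_c Vc.
  by move: Vc; rewrite {1}(size1_polyC le_c) hoevalC.
have VD : V' (hoeval (c \Po ('X - 1%:P) - c)).
  rewrite raddfB /=; apply: (submodB subV') => //.
  have := submodZ subV' e^-1 (submodE subV' Vc).
  by rewrite hoeval_E scalerA mulVf // scale1r.
have := IHd _ (size_comp_XsubC_sub _ le_c) VD.
rewrite coef_comp_XsubC_sub // mulr1 -scaler_nat -scaleNr opevalZ.
move=> /(submodZ subV' (- d.+1%:R)^-1).
by rewrite scalerA mulVf ?scale1r // oppr_eq0 pnatr_eq0.
Qed.

Lemma submod_opeval_comb a b q r : V' (opeval q Om w) -> V' (opeval r Om w) ->
  V' (opeval (a * q + b * r) Om w).
Proof.
move=> Vq Vr; rewrite opevalD !opevalM.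
by apply: (submodD subV'); apply: (submod_opeval_Omega subV').
Qed.

Variable P : {poly K}.
Hypothesis dvd_P : forall q, V' (opeval q Om w) -> P %| q.

Lemma hoeval_in_gen d c : (size c <= d)%N -> V' (hoeval c) ->
  gen E F H (opeval P Om w) (hoeval c).
Proof.
have Gsub := gen_submod E F H (opeval P Om w).
elim: d c => [|d IHd] c le_c Vc.
  by move: le_c; rewrite size_poly_leq0 => /eqP ->; rewrite raddf0; apply: (submod0 Gsub).
have c_split : c = take_poly d c + c`_d *: 'X^d.
  have le_drop : (size (drop_poly d c) <= 1)%N.
    by rewrite size_drop_poly leq_subLR addn1.
  by rewrite -{1}(poly_take_drop d c) (size1_polyC le_drop) coef_drop_poly mul_polyC.
have top : hoeval (c`_d *: 'X^d) = opeval 'X^d H (opeval c`_d Om w).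
  by rewrite -mul_polyC mulrC -(map_polyXn polyC) hoeval_lift hoevalC.
have Vy := coef_hoeval_in le_c Vc.
have Gy : gen E F H (opeval P Om w) (opeval c`_d Om w).
  by rewrite -(divpK (dvd_P Vy)) opevalM; apply: (submod_opeval_Omega Gsub).
rewrite c_split raddfD /= top; apply: (submodD Gsub); last exact: (submod_opevalH Gsub).
apply: IHd; first exact: size_take_poly.
have -> : hoeval (take_poly d c) = hoeval c - opeval 'X^d H (opeval c`_d Om w).
  by rewrite -top -raddfB /= {2}c_split addrK.
by apply: (submodB subV'); last exact: (submod_opevalH subV').
Qed.
End Submodule.

End WhittakerModule.

Theorem mainTheorem13 (R : realType) (f u : {poly R[i]})
  (hfu : f = 2%:R^-1 *: (u \Po ('X + 1) - u))
  (V : lmodType R[i]) (E F H : {linear V -> V})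
  (hrel : Rf_relations f E F H)
  (e : R[i]) (he : e != 0) (w : V)
  (hwh : whittaker_cyclic E F H e w)
  (hind : indecomposable E F H)
  (p : {poly R[i]}) (hp : irreducible_poly p) (n : nat) (hn : (1 <= n)%N)
  (hZ : forall q : {poly R[i]},
          (forall v : V, opeval q (Omega u E F H) v = 0) <-> (p ^+ n %| q)) :
  forall V' : V -> Prop, submod E F H V' ->
    exists i : nat, (i <= n)%N /\
      forall v, V' v <-> gen E F H (opeval (p ^+ i) (Omega u E F H) w) v.
Proof.
move=> V' subV'; have [Ew gen_w] := hwh.
pose J q := V' (opeval q (Omega u E F H) w).
have J_pn : J (p ^+ n) by rewrite /J (proj2 (hZ _) (dvdpp _)); apply: (submod0 subV').
have [i [le_in Ji dvd_i]] := ideal_exp_irred hp (submod_opeval_comb subV') J_pn.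
exists i; split=> // v; split=> [V'v | gen_v]; last exact: gen_v _ subV' Ji.
have [c def_v] := hoeval_surj hfu hrel he Ew gen_w v.
rewrite def_v in V'v *.
exact: (hoeval_in_gen hfu hrel he Ew subV' dvd_i (leqnn _) V'v).
Qed.
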